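(* Consider the family $Z\in\mathfrak X_S$ of the setup under the resonance condition $A=-2C$, i.e. the real eigenvalue of $DX$ equals minus twice the real part of its complex eigenvalues. Then there exist parameter values $(C,H,\Lambda)$ for which $Z$ admits at least one symmetric limit cycle. Here a symmetric limit cycle is an isolated crossing periodic orbit $\gamma$ with $S(\gamma)=\gamma$.
   Context: Setup. Fix real parameters $A\neq 0$, $C$, $H$, $\Lambda$. Let $\Sigma=\{z=0\}$, $\Sigma^+=\{z\ge0\}$ and $\Sigma^-=\{z<0\}$. Define $$X(x,y,z)=\big(Ax-H(((A-C)^2+1)z-\Lambda),\ \Lambda-(1+C^2)z,\ y+2Cz\big),$$ $$Y(x,y,z)=\big(-\Lambda-(1+C^2)z,\ Ay-H(((A-C)^2+1)z+\Lambda),\ x+2Cz\big).$$ $Z$ equals $X$ on $\Sigma^+$ and $Y$ on $\Sigma^-$; this family is denoted $\mathfrak X_S$. The matrices $DX$ and $DY$ have eigenvalues $A$ and $C\pm i$. The involution is $S(x,y,z)=(-y,-x,-z)$. A crossing periodic orbit is a periodic orbit of $Z$ made of an arc of $X$ in $\Sigma^+$ from $p_0\in\Sigma$ to $p_1\in\Sigma$, followed by an arc of $Y$ in $\Sigma^-$ from $p_1$ back to $p_0$. Both crossings are transversal, i.e. $X_3Y_3>0$ at $p_0$ and at $p_1$, where $X_3(x,y,0)=y$ and $Y_3(x,y,0)=x$. *)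

From Stdlib Require Import Reals.
Open Scope R_scope.

Definition pt := (R * R * R)%type.
Definition px (p : pt) : R := fst (fst p).
Definition py (p : pt) : R := snd (fst p).
Definition pz (p : pt) : R := snd p.

Definition Xf (A C H L : R) (p : pt) : pt :=
  let '(x, y, z) := p in
  (A * x - H * (((A - C) ^ 2 + 1) * z - L), L - (1 + C ^ 2) * z, y + 2 * C * z).

Definition Yf (A C H L : R) (p : pt) : pt :=
  let '(x, y, z) := p in
  (- L - (1 + C ^ 2) * z, A * y - H * (((A - C) ^ 2 + 1) * z + L), x + 2 * C * z).

Definition Sinv (p : pt) : pt := let '(x, y, z) := p in (- y, - x, - z).

Definition dist3 (p q : pt) : R :=
  sqrt ((px p - px q) ^ 2 + (py p - py q) ^ 2 + (pz p - pz q) ^ 2).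

Definition is_traj (V : pt -> pt) (u : R -> pt) : Prop :=
  forall t,
    derivable_pt_lim (fun s => px (u s)) t (px (V (u t))) /\
    derivable_pt_lim (fun s => py (u s)) t (py (V (u t))) /\
    derivable_pt_lim (fun s => pz (u s)) t (pz (V (u t))).

(* g (a subset of R^3) is a crossing periodic orbit of Z = (X on z>=0, Y on z<0):
   an arc of X in Sigma^+ from p0 to p1 (interior in z>0), followed by an arc of
   Y in Sigma^- from p1 back to p0 (interior in z<0), both crossings transversal
   (X3*Y3 > 0 at p0 and p1); g is the union of the two arcs. *)
Definition crossing_periodic_orbit (A C H L : R) (g : pt -> Prop) : Prop :=
  exists (p0 p1 : pt) (T1 T2 : R) (u v : R -> pt),
    0 < T1 /\ 0 < T2 /\
    is_traj (Xf A C H L) u /\ is_traj (Yf A C H L) v /\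
    u 0 = p0 /\ u T1 = p1 /\ v 0 = p1 /\ v T2 = p0 /\
    pz p0 = 0 /\ pz p1 = 0 /\
    (forall t, 0 < t < T1 -> 0 < pz (u t)) /\
    (forall t, 0 < t < T2 -> pz (v t) < 0) /\
    0 < pz (Xf A C H L p0) * pz (Yf A C H L p0) /\
    0 < pz (Xf A C H L p1) * pz (Yf A C H L p1) /\
    (forall q, g q <->
       ((exists t, 0 <= t <= T1 /\ q = u t) \/ (exists t, 0 <= t <= T2 /\ q = v t))).

(* Limit cycle: an isolated crossing periodic orbit, i.e. some neighbourhood of g
   contains no other crossing periodic orbit. *)
Definition limit_cycle (A C H L : R) (g : pt -> Prop) : Prop :=
  crossing_periodic_orbit A C H L g /\
  exists eps, 0 < eps /\
    forall g', crossing_periodic_orbit A C H L g' ->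
      (forall q, g' q -> exists p, g p /\ dist3 p q < eps) ->
      forall q, g' q <-> g q.

Definition symmetric_limit_cycle (A C H L : R) (g : pt -> Prop) : Prop :=
  limit_cycle A C H L g /\ (forall p, g p <-> g (Sinv p)).

From Stdlib Require Import Reals Lra.
From Coquelicot Require Import Coquelicot.
Open Scope R_scope.

(* Take C = 1 (so A = -2) and Lambda = -2.  On {z >= 0} the (y,z)-part of X is
   a linear focus with eigenvalues 1 +- i and x follows it with rate -2, so
   every X-arc from Sigma back to Sigma is explicit: it starts at height
   y = yin T and returns after a time T in (0, pi).  The involution S
   conjugates X to Y, so a crossing periodic orbit is an X-arc of time T1
   glued to the S-image of an X-arc of time T2, and closing it gives the two
   equations closing_defect H T1 T2 = 0 = closing_defect H T2 T1.  Monotonicity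
   in T of the arc data forces T1 = T2, and then the strictly increasing
   function omega must take the value (1 - H)/(1 + H), so there is at most one
   crossing periodic orbit.  Choosing H so that T = pi/2 solves this gives a
   unique, hence isolated, and symmetric one. *)

Lemma derive_pos_lt (f f' : R -> R) a b : a < b ->
  (forall x, a <= x <= b -> derivable_pt_lim f x (f' x)) ->
  (forall x, a < x < b -> 0 < f' x) -> f a < f b.
Proof.
  intros Hab Hd Hpos.
  destruct (MVT_cor2 f f' a b Hab Hd) as (c & Hfc & Hc).
  assert (0 < f' c * (b - a)) by (apply Rmult_lt_0_compat; [apply Hpos | ]; lra).
  lra.
Qed.

Lemma derive_0_constant (f : R -> R) :
  (forall t, derivable_pt_lim f t 0) -> constant f.
Proof.
  intros Hd. apply (null_derivative_1 f (fun t => exist _ 0 (Hd t))).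
  intros t. apply derive_pt_eq_0, Hd.
Qed.

Ltac solve_derive := apply is_derive_Reals; auto_derive; [try tauto | try field].

Lemma expN_cos_add_sin_lt_1 x : 0 < x < PI -> exp (- x) * (cos x + sin x) < 1.
Proof.
  intros Hx.
  assert (Hlt : - (exp (- 0) * (cos 0 + sin 0)) < - (exp (- x) * (cos x + sin x))).
  { apply (derive_pos_lt (fun s => - (exp (- s) * (cos s + sin s)))
                         (fun s => 2 * exp (- s) * sin s)); [lra | intros; solve_derive |].
    intros s Hs. pose proof (sin_gt_0 s ltac:(lra) ltac:(lra)). pose proof (exp_pos (- s)).
    apply Rmult_lt_0_compat; [apply Rmult_lt_0_compat |]; lra. }
  rewrite Ropp_0, exp_0, cos_0, sin_0 in Hlt. lra.
Qed.

Lemma exp_cos_sub_sin_lt_1 x : 0 < x < PI -> exp x * (cos x - sin x) < 1.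
Proof.
  intros Hx.
  assert (Hlt : - (exp 0 * (cos 0 - sin 0)) < - (exp x * (cos x - sin x))).
  { apply (derive_pos_lt (fun s => - (exp s * (cos s - sin s)))
                         (fun s => 2 * exp s * sin s)); [lra | intros; solve_derive |].
    intros s Hs. pose proof (sin_gt_0 s ltac:(lra) ltac:(lra)). pose proof (exp_pos s).
    apply Rmult_lt_0_compat; [apply Rmult_lt_0_compat |]; lra. }
  rewrite exp_0, cos_0, sin_0 in Hlt. lra.
Qed.

Lemma cosh_gt_1 x : x <> 0 -> 1 < cosh x.
Proof.
  intros Hx. pose proof (exp_pos x) as Hex.
  assert (exp x <> 1) by (intros E; apply Hx, exp_inv; rewrite E, exp_0; reflexivity).
  assert (Hsq : 0 < (exp x - 1) ^ 2 / exp x) by (apply Rdiv_lt_0_compat; [nra | lra]).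
  assert (E : cosh x - 1 = (exp x - 1) ^ 2 / exp x / 2) by (unfold cosh; rewrite exp_Ropp; field; lra).
  lra.
Qed.

Lemma cosh_sq_sub_sinh_sq x : cosh x * cosh x - sinh x * sinh x = 1.
Proof. unfold cosh, sinh. rewrite exp_Ropp. pose proof (exp_pos x). field. lra. Qed.

Lemma sinh_pos x : 0 < x -> 0 < sinh x.
Proof. intros Hx. rewrite <- sinh_0. now apply sinh_lt. Qed.

Lemma cosh_sub_cos_pos x : x <> 0 -> 0 < cosh x - cos x.
Proof. intros Hx. pose proof (cosh_gt_1 x Hx). pose proof (COS_bound x). lra. Qed.

Lemma sinh_sub_sin_pos x : 0 < x -> 0 < sinh x - sin x.
Proof.
  intros Hx.
  assert (Hlt : sinh 0 - sin 0 < sinh x - sin x).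
  { apply (derive_pos_lt (fun s => sinh s - sin s) (fun s => cosh s - cos s)); [lra | |].
    - intros s _. unfold sinh, cosh. solve_derive.
    - intros s Hs. apply cosh_sub_cos_pos. lra. }
  rewrite sinh_0, sin_0 in Hlt. lra.
Qed.

Lemma sin_cosh_sub_cos_sinh_pos x : 0 < x < PI -> 0 < sin x * cosh x - cos x * sinh x.
Proof.
  intros Hx.
  assert (Hlt : sin 0 * cosh 0 - cos 0 * sinh 0 < sin x * cosh x - cos x * sinh x).
  { apply (derive_pos_lt (fun s => sin s * cosh s - cos s * sinh s)
                         (fun s => 2 * sin s * sinh s)); [lra | |].
    - intros s _. unfold sinh, cosh. solve_derive.
    - intros s Hs. pose proof (sin_gt_0 s ltac:(lra) ltac:(lra)). pose proof (sinh_pos s ltac:(lra)).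
      apply Rmult_lt_0_compat; [apply Rmult_lt_0_compat |]; lra. }
  rewrite sin_0, sinh_0 in Hlt. lra.
Qed.

Lemma cos_mul_cosh_lt_1 x : 0 < x < PI -> cos x * cosh x < 1.
Proof.
  intros Hx.
  assert (Hlt : - (cos 0 * cosh 0) < - (cos x * cosh x)).
  { apply (derive_pos_lt (fun s => - (cos s * cosh s))
                         (fun s => sin s * cosh s - cos s * sinh s)); [lra | |].
    - intros s _. unfold sinh, cosh. solve_derive.
    - intros s Hs. apply sin_cosh_sub_cos_sinh_pos. lra. }
  rewrite cos_0, cosh_0 in Hlt. lra.
Qed.

Lemma sinh_sub_sin_div_lt a b : 0 < a -> a < b -> b < PI ->
  (sinh a - sin a) / (cosh a - cos a) < (sinh b - sin b) / (cosh b - cos b).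
Proof.
  intros Ha Hab Hb.
  apply (derive_pos_lt (fun x => (sinh x - sin x) / (cosh x - cos x))
    (fun x => ((cosh x - cos x) ^ 2 - (sinh x - sin x) * (sinh x + sin x)) / (cosh x - cos x) ^ 2));
    [exact Hab | |].
  - intros x Hx. pose proof (cosh_sub_cos_pos x ltac:(lra)).
    unfold sinh, cosh in *. apply is_derive_Reals. auto_derive; [lra | field; lra].
  - intros x Hx. pose proof (cosh_sub_cos_pos x ltac:(lra)).
    apply Rdiv_lt_0_compat; [| nra].
    assert (E : (cosh x - cos x) ^ 2 - (sinh x - sin x) * (sinh x + sin x) = 2 * (1 - cos x * cosh x)).
    { pose proof (cosh_sq_sub_sinh_sq x). pose proof (sin2_cos2 x). unfold Rsqr in *. nra. }
    pose proof (cos_mul_cosh_lt_1 x ltac:(lra)). lra.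
Qed.

Lemma tanh_alt x : tanh x = 1 - 2 / (exp (2 * x) + 1).
Proof.
  unfold tanh, sinh, cosh. rewrite exp_Ropp.
  replace (2 * x) with (x + x) by ring. rewrite exp_plus.
  pose proof (exp_pos x). field. split; nra.
Qed.

Lemma tanh_lt a b : a < b -> tanh a < tanh b.
Proof.
  intros Hab. rewrite !tanh_alt.
  assert (exp (2 * a) < exp (2 * b)) by (apply exp_increasing; lra).
  pose proof (exp_pos (2 * a)).
  assert (/ (exp (2 * b) + 1) < / (exp (2 * a) + 1)) by (apply Rinv_lt_contravar; nra).
  unfold Rdiv. lra.
Qed.

Lemma tanh_0 : tanh 0 = 0.
Proof. unfold tanh. rewrite sinh_0, cosh_0. field. Qed.

Definition omega (T : R) : R := tanh T * ((sinh T - sin T) / (cosh T - cos T)).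

Lemma omega_lt a b : 0 < a -> a < b -> b < PI -> omega a < omega b.
Proof.
  intros Ha Hab Hb. unfold omega.
  pose proof (tanh_lt a b Hab). pose proof (tanh_lt 0 a Ha). rewrite tanh_0 in *.
  pose proof (sinh_sub_sin_div_lt a b Ha Hab Hb).
  assert (0 < (sinh a - sin a) / (cosh a - cos a))
    by (apply Rdiv_lt_0_compat; [apply sinh_sub_sin_pos | apply cosh_sub_cos_pos]; lra).
  nra.
Qed.

(* An X-arc leaving Sigma at height y = yin T returns to Sigma after time T,
   at height y = - yout T (see [X_arc_end]). *)
Definition yin (T : R) : R := 1 + (exp (- T) - cos T) / sin T.
Definition yout (T : R) : R := -1 + (exp T - cos T) / sin T.

Lemma yin_lt a b : 0 < a -> a < b -> b < PI -> yin a < yin b.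
Proof.
  intros Ha Hab Hb.
  apply (derive_pos_lt yin
    (fun x => ((- exp (- x) + sin x) * sin x - (exp (- x) - cos x) * cos x) / sin x ^ 2) a b Hab).
  - intros x Hx. pose proof (sin_gt_0 x ltac:(lra) ltac:(lra)). unfold yin.
    apply is_derive_Reals. auto_derive; [lra | field; lra].
  - intros x Hx. pose proof (sin_gt_0 x ltac:(lra) ltac:(lra)).
    pose proof (expN_cos_add_sin_lt_1 x ltac:(lra)).
    pose proof (sin2_cos2 x). unfold Rsqr in *. apply Rdiv_lt_0_compat; nra.
Qed.

Lemma yout_lt a b : 0 < a -> a < b -> b < PI -> yout a < yout b.
Proof.
  intros Ha Hab Hb.
  apply (derive_pos_lt yout
    (fun x => ((exp x + sin x) * sin x - (exp x - cos x) * cos x) / sin x ^ 2) a b Hab).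
  - intros x Hx. pose proof (sin_gt_0 x ltac:(lra) ltac:(lra)). unfold yout.
    apply is_derive_Reals. auto_derive; [lra | field; lra].
  - intros x Hx. pose proof (sin_gt_0 x ltac:(lra) ltac:(lra)).
    pose proof (exp_cos_sub_sin_lt_1 x ltac:(lra)).
    pose proof (sin2_cos2 x). unfold Rsqr in *. apply Rdiv_lt_0_compat; nra.
Qed.

Lemma yin_pos T : 0 < T < PI -> 0 < yin T.
Proof.
  intros HT. pose proof (sin_gt_0 T ltac:(lra) ltac:(lra)).
  pose proof (exp_cos_sub_sin_lt_1 T HT). pose proof (exp_pos T).
  assert (E : yin T = (1 - exp T * (cos T - sin T)) / (exp T * sin T))
    by (unfold yin; rewrite exp_Ropp; field; lra).
  rewrite E. apply Rdiv_lt_0_compat; nra.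
Qed.

Lemma yout_pos T : 0 < T < PI -> 0 < yout T.
Proof.
  intros HT. pose proof (sin_gt_0 T ltac:(lra) ltac:(lra)).
  pose proof (expN_cos_add_sin_lt_1 T HT). pose proof (exp_pos T).
  assert (E : yout T = exp T * (1 - exp (- T) * (cos T + sin T)) / sin T)
    by (unfold yout; rewrite exp_Ropp; field; lra).
  rewrite E. apply Rdiv_lt_0_compat; [apply Rmult_lt_0_compat |]; lra.
Qed.

Lemma yin_lt_yout T : 0 < T < PI -> yin T < yout T.
Proof.
  intros HT. pose proof (sin_gt_0 T ltac:(lra) ltac:(lra)).
  pose proof (sinh_sub_sin_pos T ltac:(lra)).
  assert (E : yout T - yin T = 2 * (sinh T - sin T) / sin T) by (unfold yout, yin, sinh; field; lra).
  assert (0 < 2 * (sinh T - sin T) / sin T) by (apply Rdiv_lt_0_compat; lra).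
  lra.
Qed.

(* Matching condition for gluing an X-arc of time a and the S-image of an
   X-arc of time b into a closed orbit (see [glued_X_arcs]). *)
Definition closing_defect (H a b : R) : R :=
  yin a + exp (-2 * b) * yout a - H * (yout b + exp (-2 * b) * yin b).

Section ClosingDefect.

Variable H : R.
Hypothesis H_bounds : 0 < H < 1.

Lemma closing_defect_lt_swap a b : 0 < a -> a < b -> b < PI ->
  closing_defect H a b < closing_defect H b a.
Proof.
  intros Ha Hab Hb.
  pose proof (yin_lt a b Ha Hab Hb). pose proof (yout_lt a b Ha Hab Hb).
  assert (exp (-2 * b) < exp (-2 * a)) by (apply exp_increasing; lra).
  pose proof (exp_pos (-2 * a)). pose proof (exp_pos (-2 * b)).
  pose proof (yin_pos a ltac:(lra)). pose proof (yin_lt_yout a ltac:(lra)).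
  assert (E : closing_defect H b a - closing_defect H a b
            = (yin b - yin a) * (1 + H * exp (-2 * b)) + (yout b - yout a) * (exp (-2 * a) + H)
              + (exp (-2 * a) - exp (-2 * b)) * (yout a - H * yin a))
    by (unfold closing_defect; ring).
  assert (0 < (yin b - yin a) * (1 + H * exp (-2 * b))) by (apply Rmult_lt_0_compat; nra).
  assert (0 < (yout b - yout a) * (exp (-2 * a) + H)) by (apply Rmult_lt_0_compat; lra).
  assert (0 < (exp (-2 * a) - exp (-2 * b)) * (yout a - H * yin a)) by (apply Rmult_lt_0_compat; nra).
  lra.
Qed.

Lemma closing_defect_diag_eq_0 T : 0 < T < PI -> closing_defect H T T = 0 ->
  omega T = (1 - H) / (1 + H).
Proof.
  intros HT HF. pose proof (sin_gt_0 T ltac:(lra) ltac:(lra)). pose proof (exp_pos T).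
  pose proof (cosh_gt_1 T ltac:(lra)). pose proof (cosh_sub_cos_pos T ltac:(lra)).
  assert (E : closing_defect H T T
            = 2 / (sin T * exp T) * ((cosh T * (cosh T - cos T) - sinh T * (sinh T - sin T))
                 - H * (cosh T * (cosh T - cos T) + sinh T * (sinh T - sin T)))).
  { unfold closing_defect, yin, yout, sinh, cosh.
    replace (-2 * T) with (- T + - T) by ring. rewrite exp_plus, !exp_Ropp. field. lra. }
  assert (Hne : 2 / (sin T * exp T) <> 0) by (apply Rgt_not_eq, Rdiv_lt_0_compat; nra).
  rewrite E in HF. apply Rmult_integral in HF as [|HF]; [contradiction |].
  unfold omega, tanh. field_simplify_eq; [lra | repeat split; lra].
Qed.

Lemma closing_defect_eq_0_unique T a b : 0 < T < PI -> closing_defect H T T = 0 ->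
  0 < a < PI -> 0 < b < PI -> closing_defect H a b = 0 -> closing_defect H b a = 0 ->
  a = T /\ b = T.
Proof.
  intros HT HTT Ha Hb Hab Hba.
  assert (a = b) as <-.
  { destruct (Rtotal_order a b) as [Hlt | [Heq | Hgt]]; [| exact Heq |].
    - pose proof (closing_defect_lt_swap a b ltac:(lra) Hlt ltac:(lra)). lra.
    - pose proof (closing_defect_lt_swap b a ltac:(lra) Hgt ltac:(lra)). lra. }
  pose proof (closing_defect_diag_eq_0 a Ha Hab). pose proof (closing_defect_diag_eq_0 T HT HTT).
  destruct (Rtotal_order a T) as [Hlt | [Heq | Hgt]]; [| tauto |].
  - pose proof (omega_lt a T ltac:(lra) Hlt ltac:(lra)). lra.
  - pose proof (omega_lt T a ltac:(lra) Hgt ltac:(lra)). lra.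
Qed.

End ClosingDefect.

Lemma pt_eq (p q : pt) : px p = px q -> py p = py q -> pz p = pz q -> p = q.
Proof. destruct p as [[x y] z], q as [[x' y'] z']. cbn. intros -> -> ->. reflexivity. Qed.

Lemma Sinv_px p : px (Sinv p) = - py p.
Proof. now destruct p as [[x y] z]. Qed.
Lemma Sinv_py p : py (Sinv p) = - px p.
Proof. now destruct p as [[x y] z]. Qed.
Lemma Sinv_pz p : pz (Sinv p) = - pz p.
Proof. now destruct p as [[x y] z]. Qed.

Lemma Sinv_involutive p : Sinv (Sinv p) = p.
Proof. destruct p as [[x y] z]. apply pt_eq; cbn; ring. Qed.

Lemma Yf_Sinv A C H L p : Yf A C H L (Sinv p) = Sinv (Xf A C H L p).
Proof. destruct p as [[x y] z]. apply pt_eq; cbn; ring. Qed.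

Lemma Xf_Sinv A C H L p : Xf A C H L (Sinv p) = Sinv (Yf A C H L p).
Proof. rewrite <- (Sinv_involutive p) at 2. now rewrite Yf_Sinv, !Sinv_involutive. Qed.

Lemma is_traj_Sinv (V W : pt -> pt) u :
  (forall p, W (Sinv p) = Sinv (V p)) -> is_traj V u -> is_traj W (fun t => Sinv (u t)).
Proof.
  intros HVW Hu t. rewrite HVW, Sinv_px, Sinv_py, Sinv_pz.
  destruct (Hu t) as (Dx & Dy & Dz). repeat split.
  - apply (derivable_pt_lim_ext (- fun s => py (u s))%F); [intros; now rewrite Sinv_px |].
    now apply derivable_pt_lim_opp.
  - apply (derivable_pt_lim_ext (- fun s => px (u s))%F); [intros; now rewrite Sinv_py |].
    now apply derivable_pt_lim_opp.
  - apply (derivable_pt_lim_ext (- fun s => pz (u s))%F); [intros; now rewrite Sinv_pz |].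
    now apply derivable_pt_lim_opp.
Qed.

Lemma exp_mul_cancel c a b : exp c * a = b -> a = exp (- c) * b.
Proof.
  intros <-. rewrite <- Rmult_assoc, <- exp_plus.
  replace (- c + c) with 0 by ring. rewrite exp_0. ring.
Qed.

Lemma rotation_inv c s p q a b : s * s + c * c = 1 ->
  p * c - q * s = a -> p * s + q * c = b -> p = a * c + b * s /\ q = b * c - a * s.
Proof.
  intros Hcs <- <-. split.
  - transitivity (p * (s * s + c * c)); [rewrite Hcs |]; ring.
  - transitivity (q * (s * s + c * c)); [rewrite Hcs |]; ring.
Qed.

Definition flow_z (y0 t : R) : R := -1 + exp t * (cos t + (y0 - 1) * sin t).
Definition flow_y (y0 t : R) : R := 2 + exp t * ((y0 - 2) * cos t - y0 * sin t).

Lemma flow_z_PI y0 : flow_z y0 PI = -1 - exp PI.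
Proof. unfold flow_z. rewrite cos_PI, sin_PI. ring. Qed.

Lemma flow_z_eq_0 y0 T : 0 < T < PI -> flow_z y0 T = 0 -> y0 = yin T.
Proof.
  unfold flow_z, yin. intros HT HzT. pose proof (sin_gt_0 T ltac:(lra) ltac:(lra)).
  assert (E : cos T + (y0 - 1) * sin T = exp (- T) * 1) by (apply exp_mul_cancel; lra).
  apply (Rmult_eq_reg_r (sin T)); [| lra]. field_simplify; lra.
Qed.

Lemma flow_z_yin T : 0 < T < PI -> flow_z (yin T) T = 0.
Proof.
  unfold flow_z, yin. intros HT. pose proof (sin_gt_0 T ltac:(lra) ltac:(lra)).
  rewrite exp_Ropp. pose proof (exp_pos T). field. lra.
Qed.

Lemma flow_y_yin T : 0 < T < PI -> flow_y (yin T) T = - yout T.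
Proof.
  unfold flow_y, yin, yout. intros HT. pose proof (sin_gt_0 T ltac:(lra) ltac:(lra)).
  pose proof (sin2_cos2 T) as Hsc. unfold Rsqr in Hsc.
  rewrite exp_Ropp. pose proof (exp_pos T).
  field_simplify_eq; [| lra].
  assert (E : exp T * exp T * (cos T * cos T) = exp T * exp T * (1 - sin T * sin T)) by (f_equal; lra).
  nra.
Qed.

Lemma flow_z_yin_pos t T : 0 < t < T -> T < PI -> 0 < flow_z (yin T) t.
Proof.
  intros Ht HT. pose proof (yin_lt t T ltac:(lra) ltac:(lra) HT) as Hlt.
  pose proof (sin_gt_0 t ltac:(lra) ltac:(lra)). pose proof (exp_pos t).
  unfold yin at 1 in Hlt. rewrite exp_Ropp in Hlt.
  assert (Hq : / exp t - cos t < (yin T - 1) * sin t).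
  { apply (Rmult_lt_reg_r (/ sin t)); [now apply Rinv_0_lt_compat |].
    replace ((yin T - 1) * sin t * / sin t) with (yin T - 1) by (field; lra). unfold Rdiv in Hlt. lra. }
  unfold flow_z.
  assert (exp t * (/ exp t - cos t) < exp t * ((yin T - 1) * sin t)) by (apply Rmult_lt_compat_l; lra).
  replace (exp t * (/ exp t - cos t)) with (1 - exp t * cos t) in * by (field; lra).
  nra.
Qed.

Section Flow.

Variable H : R.

Let X := Xf (-2 * 1) 1 H (-2).

Definition flow (x0 y0 t : R) : pt :=
  (H * (flow_y y0 t - 2 * flow_z y0 t) + (x0 - H * y0) * exp (-2 * t), flow_y y0 t, flow_z y0 t).

Lemma flow_0 x0 y0 : flow x0 y0 0 = (x0, y0, 0).
Proof.
  unfold flow, flow_y, flow_z. rewrite Rmult_0_r, exp_0, cos_0, sin_0.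
  apply pt_eq; cbn; ring.
Qed.

Lemma is_traj_flow x0 y0 : is_traj X (flow x0 y0).
Proof.
  intros t. unfold X, flow, flow_y, flow_z; cbn.
  repeat split; apply is_derive_Reals; auto_derive; auto; ring.
Qed.

Lemma X_eq p : X p = (-2 * px p - H * (10 * pz p + 2), -2 - 2 * pz p, py p + 2 * pz p).
Proof. destruct p as [[x y] z]. apply pt_eq; cbn; ring. Qed.

Lemma is_traj_X_derive u t : is_traj X u ->
  is_derive (fun s => px (u s)) t (-2 * px (u t) - H * (10 * pz (u t) + 2)) /\
  is_derive (fun s => py (u s)) t (-2 - 2 * pz (u t)) /\
  is_derive (fun s => pz (u s)) t (py (u t) + 2 * pz (u t)).
Proof.
  intros Hu. destruct (Hu t) as (Dx & Dy & Dz). rewrite X_eq in Dx, Dy, Dz.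
  split; [| split]; now apply is_derive_Reals.
Qed.

(* In the coordinates p = z + 1, q = y + z - 1 the (y,z)-system reads
   p' = p + q, q' = q - p, a rotation at unit speed combined with growth e^t. *)
Section FirstIntegrals.

Variables x y z : R -> R.
Hypothesis dx : forall t, is_derive x t (-2 * x t - H * (10 * z t + 2)).
Hypothesis dy : forall t, is_derive y t (-2 - 2 * z t).
Hypothesis dz : forall t, is_derive z t (y t + 2 * z t).

Lemma linear_first_integrals :
  constant (fun t => exp (- t) * ((z t + 1) * cos t - (y t + z t - 1) * sin t)) /\
  constant (fun t => exp (- t) * ((z t + 1) * sin t + (y t + z t - 1) * cos t)) /\
  constant (fun t => exp (2 * t) * (x t - H * (y t - 2 * z t))).
Proof.
  assert (Dx : forall t, Derive (fun s => x s) t = -2 * x t - H * (10 * z t + 2))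
    by (intros; apply is_derive_unique, dx).
  assert (Dy : forall t, Derive (fun s => y s) t = -2 - 2 * z t)
    by (intros; apply is_derive_unique, dy).
  assert (Dz : forall t, Derive (fun s => z s) t = y t + 2 * z t)
    by (intros; apply is_derive_unique, dz).
  split; [| split]; apply derive_0_constant; intros t; apply is_derive_Reals.
  all: auto_derive; [repeat split; eexists; eauto |].
  all: rewrite ?Dx, ?Dy, ?Dz; ring.
Qed.

End FirstIntegrals.

Lemma traj_eq_flow u : is_traj X u -> pz (u 0) = 0 ->
  forall t, u t = flow (px (u 0)) (py (u 0)) t.
Proof.
  intros Hu Hz0 t.
  destruct (linear_first_integrals (fun s => px (u s)) (fun s => py (u s)) (fun s => pz (u s)))
    as (I1 & I2 & I3); try (intros s; apply (is_traj_X_derive u s Hu)).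
  specialize (I1 t 0). specialize (I2 t 0). specialize (I3 t 0). cbv beta in I1, I2, I3.
  rewrite Hz0, Ropp_0, exp_0, cos_0, sin_0 in I1, I2.
  rewrite Hz0, Rmult_0_r, exp_0 in I3.
  apply exp_mul_cancel in I1, I2, I3. rewrite Ropp_involutive in I1, I2.
  pose proof (sin2_cos2 t) as Hsc. unfold Rsqr in Hsc.
  destruct (rotation_inv _ _ _ _ _ _ Hsc I1 I2) as [Ez Eyz].
  assert (Hz : pz (u t) = flow_z (py (u 0)) t) by (unfold flow_z; lra).
  assert (Hy : py (u t) = flow_y (py (u 0)) t) by (unfold flow_y; lra).
  replace (- (2 * t)) with (-2 * t) in I3 by ring.
  unfold flow. apply pt_eq; cbn; [| exact Hy | exact Hz].
  rewrite <- Hy, <- Hz. lra.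
Qed.

Lemma traj_unique u w : is_traj X u -> is_traj X w -> pz (u 0) = 0 -> w 0 = u 0 ->
  forall t, w t = u t.
Proof.
  intros Hu Hw Hz0 E t.
  rewrite (traj_eq_flow u Hu Hz0), (traj_eq_flow w Hw) by now rewrite E.
  now rewrite E.
Qed.

Definition X_arc (u : R -> pt) (T : R) : Prop :=
  is_traj X u /\ pz (u 0) = 0 /\ 0 < T /\ pz (u T) = 0 /\
  forall t, 0 < t < T -> 0 < pz (u t).

Lemma X_arc_end u T : X_arc u T ->
  T < PI /\ py (u 0) = yin T /\
  u T = (- H * yout T + (px (u 0) - H * yin T) * exp (-2 * T), - yout T, 0).
Proof.
  intros (Hu & Hz0 & HT & HzT & Hpos).
  pose proof (traj_eq_flow u Hu Hz0) as Eu.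
  assert (HTPI : T < PI).
  { destruct (Rlt_or_le T PI) as [| Hle]; [assumption | exfalso].
    pose proof (exp_pos PI). pose proof (flow_z_PI (py (u 0))).
    destruct (Req_dec T PI) as [-> | Hne].
    - rewrite Eu in HzT. cbn in HzT. lra.
    - specialize (Hpos PI ltac:(pose proof PI_RGT_0; lra)). rewrite Eu in Hpos. cbn in Hpos. lra. }
  assert (Hy0 : py (u 0) = yin T).
  { apply flow_z_eq_0; [lra |]. rewrite Eu in HzT. exact HzT. }
  split; [exact HTPI | split; [exact Hy0 |]].
  rewrite Eu, Hy0. unfold flow.
  rewrite flow_y_yin, flow_z_yin by lra.
  apply pt_eq; cbn; ring.
Qed.

Lemma glued_X_arcs u w T1 T2 : X_arc u T1 -> X_arc w T2 ->
  w 0 = Sinv (u T1) -> w T2 = Sinv (u 0) ->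
  T1 < PI /\ T2 < PI /\ closing_defect H T1 T2 = 0 /\ closing_defect H T2 T1 = 0 /\
  u 0 = (yout T2, yin T1, 0).
Proof.
  intros Hu Hw Ew0 EwT.
  destruct (X_arc_end u T1 Hu) as (HT1 & Hu0 & HuT).
  destruct (X_arc_end w T2 Hw) as (HT2 & Hw0 & HwT).
  destruct Hu as (_ & Hz0 & _).
  rewrite Ew0, HuT in Hw0. rewrite EwT in HwT. rewrite Ew0, HuT in HwT.
  rewrite Sinv_py in Hw0. cbn in Hw0.
  apply (f_equal px) in HwT as HwTx. apply (f_equal py) in HwT as HwTy.
  rewrite Sinv_px, Sinv_px in HwTx. rewrite Sinv_py in HwTy. cbn in HwTx, HwTy.
  unfold closing_defect. repeat split; [lra | lra | nra | nra |].
  apply pt_eq; cbn; lra.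
Qed.

End Flow.

Definition T0 : R := PI / 2.

Definition H0 : R :=
  (yin T0 + exp (-2 * T0) * yout T0) / (yout T0 + exp (-2 * T0) * yin T0).

Lemma T0_bounds : 0 < T0 < PI.
Proof. unfold T0. pose proof PI_RGT_0. lra. Qed.

Lemma H0_bounds : 0 < H0 < 1.
Proof.
  pose proof (yin_pos T0 T0_bounds). pose proof (yout_pos T0 T0_bounds).
  pose proof (yin_lt_yout T0 T0_bounds). pose proof (exp_pos (-2 * T0)).
  assert (exp (-2 * T0) < 1) by (rewrite <- exp_0; apply exp_increasing; pose proof T0_bounds; lra).
  unfold H0. split.
  - apply Rdiv_lt_0_compat; nra.
  - apply Rlt_div_l; nra.
Qed.

Lemma closing_defect_H0_T0 : closing_defect H0 T0 T0 = 0.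
Proof.
  pose proof (yin_pos T0 T0_bounds). pose proof (yout_pos T0 T0_bounds). pose proof (exp_pos (-2 * T0)).
  unfold closing_defect, H0. field. nra.
Qed.

Definition cycle_arc : R -> pt := flow H0 (yout T0) (yin T0).

Definition cycle (q : pt) : Prop :=
  (exists t, 0 <= t <= T0 /\ q = cycle_arc t) \/
  (exists t, 0 <= t <= T0 /\ q = Sinv (cycle_arc t)).

Lemma X_arc_cycle_arc : X_arc H0 cycle_arc T0.
Proof.
  pose proof T0_bounds.
  unfold X_arc, cycle_arc. repeat match goal with |- _ /\ _ => split end.
  - apply is_traj_flow.
  - now rewrite flow_0.
  - lra.
  - apply flow_z_yin; lra.
  - intros t Ht. apply flow_z_yin_pos; lra.
Qed.

Lemma cycle_arc_0 : cycle_arc 0 = (yout T0, yin T0, 0).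
Proof. apply flow_0. Qed.

Lemma cycle_arc_T0 : cycle_arc T0 = Sinv (cycle_arc 0).
Proof.
  destruct (X_arc_end H0 cycle_arc T0 X_arc_cycle_arc) as (_ & _ & ->).
  rewrite cycle_arc_0. pose proof closing_defect_H0_T0. unfold closing_defect in *.
  apply pt_eq; cbn; lra.
Qed.

Lemma cycle_crossing : crossing_periodic_orbit (-2 * 1) 1 H0 (-2) cycle.
Proof.
  pose proof T0_bounds. pose proof (yin_pos T0 T0_bounds). pose proof (yout_pos T0 T0_bounds).
  destruct X_arc_cycle_arc as (Hu & Hz0 & _ & HzT & Hpos).
  exists (cycle_arc 0), (cycle_arc T0), T0, T0, cycle_arc, (fun t => Sinv (cycle_arc t)).
  repeat match goal with |- _ /\ _ => split end; try lra; try reflexivity.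
  - exact Hu.
  - exact (is_traj_Sinv _ _ _ (Yf_Sinv _ _ _ _) Hu).
  - symmetry. apply cycle_arc_T0.
  - now rewrite cycle_arc_T0, Sinv_involutive.
  - exact Hpos.
  - intros t Ht. rewrite Sinv_pz. specialize (Hpos t Ht). lra.
  - rewrite cycle_arc_0. cbn. nra.
  - rewrite cycle_arc_T0, cycle_arc_0. cbn. nra.
Qed.

Lemma cycle_Sinv p : cycle p <-> cycle (Sinv p).
Proof.
  unfold cycle. split.
  - intros [(t & Ht & ->) | (t & Ht & ->)].
    + right. now exists t.
    + left. exists t. now rewrite Sinv_involutive.
  - intros [(t & Ht & E) | (t & Ht & E)].
    + right. exists t. now rewrite <- E, Sinv_involutive.
    + left. exists t. now rewrite <- (Sinv_involutive p), E, Sinv_involutive.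
Qed.

Lemma crossing_orbit_eq_cycle g :
  crossing_periodic_orbit (-2 * 1) 1 H0 (-2) g -> forall q, g q <-> cycle q.
Proof.
  intros (p0 & p1 & T1 & T2 & u & v & HT1 & HT2 & Hu & Hv & Hu0 & HuT & Hv0 & HvT
          & Hz0 & Hz1 & Hpu & Hpv & _ & _ & Hg).
  set (w := fun t => Sinv (v t)).
  assert (Hw : is_traj (Xf (-2 * 1) 1 H0 (-2)) w)
    by exact (is_traj_Sinv _ _ _ (Xf_Sinv _ _ _ _) Hv).
  assert (Harc_u : X_arc H0 u T1) by (unfold X_arc; subst; tauto).
  assert (Harc_w : X_arc H0 w T2).
  { unfold X_arc, w. repeat match goal with |- _ /\ _ => split end;
      [exact Hw | | lra | |]; rewrite ?Sinv_pz, ?Hv0, ?HvT; try lra.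
    intros t Ht. rewrite Sinv_pz. specialize (Hpv t Ht). lra. }
  destruct (glued_X_arcs H0 u w T1 T2 Harc_u Harc_w) as (HT1PI & HT2PI & D12 & D21 & Eu0);
    [unfold w; congruence .. |].
  destruct (closing_defect_eq_0_unique H0 H0_bounds T0 T1 T2 T0_bounds closing_defect_H0_T0
              ltac:(lra) ltac:(lra) D12 D21) as [-> ->].
  assert (Eu : forall t, u t = cycle_arc t).
  { apply traj_unique with H0; [apply X_arc_cycle_arc | exact Hu | | ].
    - now rewrite cycle_arc_0.
    - now rewrite Eu0, cycle_arc_0. }
  assert (Ev : forall t, v t = Sinv (cycle_arc t)).
  { intros t. rewrite <- (Sinv_involutive (v t)). f_equal.
    apply (traj_unique H0 cycle_arc w); [apply X_arc_cycle_arc | exact Hw | now rewrite cycle_arc_0 |].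
    unfold w. now rewrite Hv0, <- HuT, Eu, cycle_arc_T0, Sinv_involutive. }
  intros q. rewrite Hg. unfold cycle.
  setoid_rewrite Eu. setoid_rewrite Ev. tauto.
Qed.

Theorem theorem1 :
  exists C H L : R, (-2 * C) <> 0 /\
    exists g : pt -> Prop, symmetric_limit_cycle (-2 * C) C H L g.
Proof.
  exists 1, H0, (-2). split; [lra |].
  exists cycle. split; [| exact cycle_Sinv].
  split; [exact cycle_crossing |].
  exists 1. split; [lra |].
  intros g Hg _. now apply crossing_orbit_eq_cycle.
Qed.
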